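(* Let $P$ be a finite set of constrained Horn clauses over a background theory admitting Craig interpolation, let $t \in \mathcal{L}(\mathcal{A}_P)$ be an infeasible trace-term, and let $TI(t)$ be a tree interpolant of $t$. Then every tree accepted by the interpolant tree automaton $\mathcal{A}^I_t$ is an infeasible trace-term of $P$; that is, $\mathcal{L}(\mathcal{A}^I_t)$ contains only infeasible trace-terms of $P$.
   Context: A constrained Horn clause (CHC) is a formula $p(X) \leftarrow \phi, p_1(X_1),\ldots,p_k(X_k)$ ($k\ge 0$), where $p,p_i$ are predicate symbols, $X, X_i$ are tuples of distinct variables and $\phi$ is a constraint of the background theory; $p(X)$ is the head. There is a distinguished predicate $\mathit{false}$ (interpreted as false). Each clause $cl$ of $P$ has an identifier $\mathsf{id}_P(cl)$, a function symbol of arity $k$ (the number of body atoms). The trace FTA $\mathcal{A}_P$ is the finite tree automaton whose states are the predicate symbols of $P$ together with $\mathit{false}$, whose only final state is $\mathit{false}$, and with one transition $c(p_1,\ldots,p_k)\to p$ for each clause $p(X)\leftarrow\phi,p_1(X_1),\ldots,p_k(X_k)$ of $P$ with identifier $c$. Elements of $\mathcal{L}(\mathcal{A}_P)$ are trace-terms (rooted at $\mathit{false}$). The AND-tree $T(t)$ of a trace-term $t$: each subterm $c(t_1,\ldots,t_k)$ of $t$ corresponds to a node labelled by an atom $p(X)$, the identifier $c$ of a clause $p(X)\leftarrow\phi,p_1(X_1),\ldots,p_k(X_k)$ and the constraint $\phi$, whose children are the nodes for $t_1,\ldots,t_k$, labelled by atoms $p_1(X_1),\ldots,p_k(X_k)$;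 variables are renamed so that local variables of the clause used at a node do not occur outside the subtree rooted at that node. Nodes are numbered uniquely. $F(T)$ is the conjunction of the constraint labels of all nodes of $T$; $T$ (and $t$) is feasible iff $F(T)$ is satisfiable, infeasible otherwise. For a node $i$, $T_i$ is the subtree rooted at $i$, $\phi_i$ is its constraint label, and $G(T_i)$ is the conjunction of the constraint labels of all nodes of $T$ not in $T_i$ ($\mathit{true}$ if none). A (Craig) interpolant $I(\psi_1,\psi_2)$ of formulas with $\psi_1\wedge\psi_2$ unsatisfiable is a formula $I$ with $\psi_1\to I$, $I\wedge\psi_2$ unsatisfiable, and $\mathrm{vars}(I)\subseteq\mathrm{vars}(\psi_1)\cap\mathrm{vars}(\psi_2)$. Tree interpolant $TI(t)$ of an infeasible trace-term $t$ with AND-tree $T$: a tree with the same nodes and atom labels as $T$, where each node $i$ carries a formula $I_i$: the root gets $\mathit{false}$; a leaf $i$ gets $I(F(T_i),G(T_i))$; any other node $i$ with children having formulas $I_{k_1},\ldots,I_{k_n}$ gets $I(\phi_i\wedge\bigwedge_{m} I_{k_m},\,G(T_i))$. The interpolant mapping is $\Pi_{TI}(A^j)=I_j$, where $A$ is the atom label of node $j$; writing the atom at node $j$ as $p(Y_j)$, $I_j$ is viewed as a formula over $Y_j$, and $\Pi_{TI}(p^j)(X)$ denotes it with $Y_j$ replaced by $X$. Interpolant tree automaton $\mathcal{A}^I_t$: states are the symbols $p^j$ for each node $j$ of $TI(t)$ with atom predicate $p$; the final state is $\mathit{false}^r$ for the root $r$; the alphabet is the set of clause identifiers of $P$; transitions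 are all $c(p_1^{j_1},\ldots,p_k^{j_k})\to p^j$ such that there is a clause $cl = p(X)\leftarrow\phi,p_1(X_1),\ldots,p_k(X_k)$ in $P$ with $c=\mathsf{id}_P(cl)$, nodes $j,j_1,\ldots,j_k$ of $TI(t)$ whose atom predicates are $p,p_1,\ldots,p_k$ respectively, and the implication $\phi\wedge\bigwedge_{m=1}^k\Pi_{TI}(p_m^{j_m})(X_m)\rightarrow\Pi_{TI}(p^j)(X)$ is valid. *)

From mathcomp Require Import all_boot.
Set Implicit Arguments. Unset Strict Implicit. Unset Printing Implicit Defensive.

(* A constrained Horn clause  head(hargs) <- constr, body_1(X_1), ..., body_k(X_k).
   Variables range over [Var]; the background theory is a structure with carrier
   [D]; a constraint is (the semantics of) a formula, i.e. a predicate on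
   valuations [Var -> D]. *)
Record clause (Pred : Type) (Var : eqType) (D : Type) := Clause {
  head : Pred;
  hargs : seq Var;
  constr : (Var -> D) -> Prop;
  body : seq (Pred * seq Var) }.

(* A finite set of CHCs is a list; the identifier of a clause is its index
   in the list (its arity is the number of body atoms). *)
Definition program (Pred : Type) (Var : eqType) (D : Type) := seq (clause Pred Var D).

Definition wf_clause Pred (Var : eqType) D (cl : clause Pred Var D) :=
  uniq (hargs cl) /\ forall i b, onth (body cl) i = Some b -> uniq b.2.
Definition wf_prog Pred (Var : eqType) D (P : program Pred Var D) :=
  forall c cl, onth P c = Some cl -> wf_clause cl.

Inductive trace := TNode of nat & seq trace.

Inductive trace_acc Pred (Var : eqType) D (P : program Pred Var D) : Pred -> trace -> Prop :=
| TA : forall c ts cl,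
    onth P c = Some cl ->
    size ts = size (body cl) ->
    (forall i t' b, onth ts i = Some t' -> onth (body cl) i = Some b -> trace_acc P b.1 t') ->
    trace_acc P (head cl) (TNode c ts).

(* t is a trace-term of P: t in L(A_P), i.e. accepted in the final state false. *)
Definition trace_term Pred (Var : eqType) D (fls : Pred) (P : program Pred Var D) (t : trace) :=
  trace_acc P fls t.

(* Nodes of the AND-tree are positions (paths from the root). *)
Fixpoint subtree (t : trace) (p : seq nat) : option trace :=
  match p with
  | [::] => Some t
  | i :: p' => let: TNode _ ts := t in
      match onth ts i with Some t' => subtree t' p' | None => None end
  end.

Definition is_node (t : trace) (p : seq nat) := subtree t p <> None.

Definition node_clause Pred (Var : eqType) D (P : program Pred Var D) (t : trace) (p : seq nat)
  : option (clause Pred Var D) :=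
  match subtree t p with Some (TNode c _) => onth P c | None => None end.

Definition node_pred Pred (Var : eqType) D (P : program Pred Var D) (t : trace) (p : seq nat)
  : option Pred := omap (@head Pred Var D) (node_clause P t p).

(* Semantics of the conjunction of the (renamed) constraint labels of the nodes
   in S: [val p] is the valuation of the variables of the clause used at node p;
   the renaming identifies the head arguments of a child with the corresponding
   body arguments of its parent. *)
Definition consistent Pred (Var : eqType) D (P : program Pred Var D) (t : trace)
  (S : seq nat -> Prop) (val : seq nat -> Var -> D) :=
  (forall p cl, S p -> node_clause P t p = Some cl -> constr cl (val p)) /\
  (forall p i cl cl' b, S p -> S (rcons p i) ->
     node_clause P t p = Some cl -> node_clause P t (rcons p i) = Some cl' ->
     onth (body cl) i = Some b ->
     map (val p) b.2 = map (val (rcons p i)) (hargs cl')).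

Definition feasible Pred (Var : eqType) D (P : program Pred Var D) (t : trace) :=
  exists val, consistent P t (is_node t) val.

(* Tree interpolant: I j is the formula at node j, viewed as a formula over the
   arguments Y_j of the atom at node j (a predicate on their values). *)
Definition tree_interpolant Pred (Var : eqType) D (P : program Pred Var D) (t : trace)
  (I : seq nat -> seq D -> Prop) :=
  (forall a, ~ I [::] a) /\
  (forall j i cl, node_clause P t (rcons j i) = Some cl ->
     (forall v : Var -> D, constr cl v ->
        (forall m b, onth (body cl) m = Some b -> I (rcons (rcons j i) m) (map v b.2)) ->
        I (rcons j i) (map v (hargs cl))) /\
     (forall clp b, node_clause P t j = Some clp -> onth (body clp) i = Some b ->
        ~ exists val, consistent P t (fun p => is_node t p /\ ~ prefix (rcons j i) p) val
                      /\ I (rcons j i) (map (val j) b.2))).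

(* Acceptance by the interpolant tree automaton A^I_t from state p^j (state = node j
   of TI(t); its predicate p is node_pred P t j). *)
Inductive ia_acc Pred (Var : eqType) D (P : program Pred Var D) (t : trace)
  (I : seq nat -> seq D -> Prop) : seq nat -> trace -> Prop :=
| IA : forall j c ss cl js,
    onth P c = Some cl ->
    node_pred P t j = Some (head cl) ->
    size js = size (body cl) ->
    size ss = size js ->
    (forall m jm b, onth js m = Some jm -> onth (body cl) m = Some b ->
       node_pred P t jm = Some b.1) ->
    (forall v : Var -> D, constr cl v ->
       (forall m jm b, onth js m = Some jm -> onth (body cl) m = Some b -> I jm (map v b.2)) ->
       I j (map v (hargs cl))) ->
    (forall m s' jm, onth ss m = Some s' -> onth js m = Some jm -> ia_acc P t I jm s') ->
    ia_acc P t I j (TNode c ss).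

From mathcomp Require Import all_boot.
Set Implicit Arguments. Unset Strict Implicit. Unset Printing Implicit Defensive.

(* Every transition of the interpolant automaton carries the interpolant
   implication phi /\ I_(j_1) /\ ... /\ I_(j_k) -> I_j.  Hence, by induction on
   an accepted tree s, any valuation satisfying F(T(s)) satisfies, at the root
   of s, the interpolant of the state in which s is accepted.  Accepted in the
   root state, that interpolant is false, so s is infeasible.  Since the state
   p^j always carries the predicate p of node j, the run of the interpolant
   automaton is also a run of the trace automaton, so s is a trace-term. *)

Lemma onth_size_some (A B : Type) (xs : seq A) (ys : seq B) m x :
  size xs = size ys -> onth xs m = Some x -> exists y, onth ys m = Some y.
Proof.
move=> eq_size xs_m; have := onthTE xs m.
rewrite xs_m eq_size -onthTE; case: onth => [y _|//].
by exists y.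
Qed.

Section InterpolantAutomaton.

Variables (Pred : Type) (Var : eqType) (D : Type) (P : program Pred Var D).

Section Child.

Variables (c m : nat) (ss : seq trace) (s : trace).
Hypothesis ss_m : onth ss m = Some s.

Lemma subtree_child p : subtree (TNode c ss) (m :: p) = subtree s p.
Proof. by rewrite /= ss_m. Qed.

Lemma node_clause_child p :
  node_clause P (TNode c ss) (m :: p) = node_clause P s p.
Proof. by rewrite /node_clause subtree_child. Qed.

Lemma is_node_child p : is_node (TNode c ss) (m :: p) <-> is_node s p.
Proof. by rewrite /is_node subtree_child. Qed.

Lemma consistent_child val :
  consistent P (TNode c ss) (is_node (TNode c ss)) val ->
  consistent P s (is_node s) (fun p => val (m :: p)).
Proof.
case=> val_constr val_args; split=> [p cl p_s cl_p | p i cl cl' b p_s pi_s cl_p cl'_pi b_i].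
- by apply: val_constr; [apply/is_node_child | rewrite node_clause_child].
- apply: (val_args (m :: p) i cl cl' b) => //; first exact/is_node_child.
  + exact/(is_node_child (rcons p i)).
  + by rewrite node_clause_child.
  + by rewrite /= node_clause_child.
Qed.

End Child.

Variables (t : trace) (I : seq nat -> seq D -> Prop).

Lemma ia_acc_trace_acc j s q :
  ia_acc P t I j s -> node_pred P t j = Some q -> trace_acc P q s.
Proof.
move=> acc; elim: acc q => {s} {}j c ss cl js P_c j_pred size_js size_ss js_pred
  _ _ IH q j_q.
rewrite j_q in j_pred; case: j_pred => ->.
apply: TA => // [|i s b ss_i body_i]; first by rewrite size_ss.
have [jm js_i] := onth_size_some size_ss ss_i.
exact: IH ss_i js_i _ (js_pred _ _ _ js_i body_i).
Qed.

Lemma ia_acc_root_interpolant j s val :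
  ia_acc P t I j s -> consistent P s (is_node s) val ->
  exists2 cl, node_clause P s [::] = Some cl & I j (map (val [::]) (hargs cl)).
Proof.
move=> acc; elim: acc val => {s} {}j c ss cl js P_c _ size_js size_ss _
  transition _ IH val cons_val.
exists cl => //; apply: transition => [|m jm b js_m body_m].
  by apply: cons_val.1.
have [s ss_m] : exists s, onth ss m = Some s.
  by apply: onth_size_some js_m; rewrite size_ss.
have [clm clm_m Ijm] := IH m s jm ss_m js_m _ (consistent_child ss_m cons_val).
suff -> : map (val [::]) b.2 = map (val [:: m]) (hargs clm) by [].
apply: (cons_val.2 [::] m cl clm b) => //; first by rewrite /is_node /= ss_m.
by rewrite /= (node_clause_child _ ss_m).
Qed.

End InterpolantAutomaton.

Theorem theorem1 (Pred : Type) (Var : eqType) (D : Type) (fls : Pred)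
  (P : program Pred Var D) (t : trace) (I : seq nat -> seq D -> Prop) :
  wf_prog P ->
  trace_term fls P t -> ~ feasible P t ->
  tree_interpolant P t I ->
  forall s, ia_acc P t I [::] s -> trace_term fls P s /\ ~ feasible P s.
Proof.
move=> _ t_trace _ [root_false _] s s_acc; split.
- apply: (ia_acc_trace_acc s_acc).
  by case: t_trace => c ts cl P_c _ _; rewrite /node_pred /node_clause /= P_c.
- case=> val cons_val.
  have [cl _ I_root] := ia_acc_root_interpolant s_acc cons_val.
  exact: root_false I_root.
Qed.
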